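(* In the linear deterministic diamond network with a disturbing node with gains $n_1,n_2,n_3,n_4,m$, suppose $n_1=n_2$ and $m<n_1$. Then the linear capacity is $C=\min\big(n_1-m,\ \max(n_3,n_4)\big)$.
   Context: The shift matrix $Q$ is the $q\times q$ matrix over $\mathbb{F}_2$ with $Q_{i+1,i}=1$ for $1\le i\le q-1$ and all other entries $0$, where $q=\max(n_1,n_2,n_3,n_4,m)$ and all gains are nonnegative integers. Network: source $S$, relays $A,B$, destination $D$, disturbing node $M$; gains $n_1$ ($S\to A$), $n_2$ ($S\to B$), $n_3$ ($A\to D$), $n_4$ ($B\to D$), $m$ ($M\to A$ and $M\to B$). Each node transmits $x_i\in\mathbb{F}_2^q$ and receives $y_j=\sum_{k:(k,j)\text{ an edge}}Q^{q-n_{(k,j)}}x_k$; relays use linear maps $x_A=G_Ay_A$, $x_B=G_By_B$ with $G_A,G_B$ arbitrary $q\times q$ matrices over $\mathbb{F}_2$. Then $y_D=G_Sx_S+G_Mx_M$ with $G_S=Q^{q-n_3}G_AQ^{q-n_1}+Q^{q-n_4}G_BQ^{q-n_2}$ and $G_M=Q^{q-n_3}G_AQ^{q-m}+Q^{q-n_4}G_BQ^{q-m}$. The rate $R(G_A,G_B)$ is the maximum dimension of a subspace $\mathcal{X}\subseteq\mathbb{F}_2^q$ such that for all $x_S,x_S'\in\mathcal{X}$, $x_M,x_M'\in\mathbb{F}_2^q$, $G_Sx_S+G_Mx_M=G_Sx_S'+G_Mx_M'$ implies $x_S=x_S'$. The linear capacity is $C=\max_{G_A,G_B}R(G_A,G_B)$.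 *)

From HB Require Import structures.
From mathcomp Require Import all_boot all_order all_algebra.
Unset Strict Implicit. Unset Printing Implicit Defensive.
Import GRing.Theory.
Local Open Scope ring_scope.

Definition qdim (n1 n2 n3 n4 m : nat) : nat :=
  maxn (maxn (maxn n1 n2) (maxn n3 n4)) m.

(* Shift matrix: Q_{i+1,i} = 1 (1-indexed), i.e. Q i j = 1 iff i = j+1 (0-indexed). *)
Definition shiftQ (q : nat) : 'M['F_2]_q :=
  \matrix_(i < q, j < q) (if (i : nat) == (j : nat).+1 then 1 else 0).

Definition chan (q n : nat) : 'M['F_2]_q := (shiftQ q) ^+ (q - n).

Definition GS (n1 n2 n3 n4 m : nat) (GA GB : 'M['F_2]_(qdim n1 n2 n3 n4 m)) :=
  let q := qdim n1 n2 n3 n4 m in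
  chan q n3 *m GA *m chan q n1 + chan q n4 *m GB *m chan q n2.

Definition GM (n1 n2 n3 n4 m : nat) (GA GB : 'M['F_2]_(qdim n1 n2 n3 n4 m)) :=
  let q := qdim n1 n2 n3 n4 m in
  chan q n3 *m GA *m chan q m + chan q n4 *m GB *m chan q m.

Definition admissible (n1 n2 n3 n4 m : nat) (GA GB : 'M['F_2]_(qdim n1 n2 n3 n4 m))
  (X : {vspace 'cV['F_2]_(qdim n1 n2 n3 n4 m)}) : Prop :=
  forall xS xS' : 'cV['F_2]_(qdim n1 n2 n3 n4 m), xS \in X -> xS' \in X ->
  forall xM xM' : 'cV['F_2]_(qdim n1 n2 n3 n4 m),
    GS n1 n2 n3 n4 m GA GB *m xS + GM n1 n2 n3 n4 m GA GB *m xM =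
    GS n1 n2 n3 n4 m GA GB *m xS' + GM n1 n2 n3 n4 m GA GB *m xM' ->
    xS = xS'.

Definition is_rate (n1 n2 n3 n4 m : nat) (GA GB : 'M['F_2]_(qdim n1 n2 n3 n4 m))
  (r : nat) : Prop :=
  (exists X, admissible n1 n2 n3 n4 m GA GB X /\ \dim X = r) /\
  (forall X, admissible n1 n2 n3 n4 m GA GB X -> (\dim X <= r)%N).

Definition is_linear_capacity (n1 n2 n3 n4 m : nat) (c : nat) : Prop :=
  (exists GA GB, is_rate n1 n2 n3 n4 m GA GB c) /\
  (forall GA GB r, is_rate n1 n2 n3 n4 m GA GB r -> (r <= c)%N).

From Pilot Require Import Defs.
From mathcomp Require Import all_boot all_order all_algebra.
From mathcomp Require Import zify.
Set Implicit Arguments. Unset Strict Implicit.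
Import GRing.Theory.
Local Open Scope ring_scope.

(* Since n1 = n2, the disturbance reaches D through the same relays as the
   source message, only shifted: G_M = G_S Q^(n1-m).  A decodable subspace X
   therefore injects into the image of G_S, which is spanned by the last
   max(n3,n4) coordinates, and is determined by its first n1-m coordinates:
   a message vanishing there is Q^(n1-m) z, indistinguishable from the
   disturbance z.  Conversely, the stronger relay alone forwards the first
   min(n1-m, max(n3,n4)) source coordinates, which the disturbance never
   reaches. *)

Section Coefficients.

Variables (R : pzRingType) (q : nat).
Implicit Types (v w : 'cV[R]_q) (l : nat).

(* Coordinate l of v, read as 0 for l >= q, so that index shifts stay in nat. *)
Definition coefv v l : R := if insub l is Some i then v i 0 else 0.

Lemma coefv_ord v (i : 'I_q) : coefv v i = v i 0.
Proof. by rewrite /coefv valK. Qed.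

Lemma coefv_out v l : (q <= l)%N -> coefv v l = 0.
Proof. by move=> ql; rewrite /coefv insubN // -leqNgt. Qed.

Lemma coefv_inj v w : (forall l, coefv v l = coefv w l) -> v = w.
Proof. by move=> e; apply/matrixP => i j; rewrite ord1 -!coefv_ord. Qed.

Lemma coefv0 l : coefv (0 : 'cV[R]_q) l = 0.
Proof. by rewrite /coefv; case: insub => [i|]; rewrite ?mxE. Qed.

Lemma coefvB v w l : coefv (v - w) l = coefv v l - coefv w l.
Proof. by rewrite /coefv; case: insub => [i|]; rewrite ?mxE ?subr0. Qed.

Lemma sum_coefv v a : \sum_(j < q) ((j : nat) == a)%:R * v j 0 = coefv v a.
Proof.
case: (ltnP a q) => [aq | qa]; last first.
  rewrite coefv_out // big1 // => j _.
  by rewrite (_ : _ == a = false) ?mul0r //; apply/eqP; move: (ltn_ord j); lia.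
rewrite (bigD1 (Ordinal aq)) //= eqxx mul1r -(coefv_ord v (Ordinal aq)).
rewrite big1 ?addr0 // => j /eqP ja.
by case: eqP => [e|]; [case: ja; apply: val_inj | rewrite mul0r].
Qed.

Definition window (c s : nat) : 'M[R]_q :=
  \matrix_(i, j) (((i : nat) < c)%N && ((j : nat) == i + s)%N)%:R.

Lemma coefv_window c s v l :
  coefv (window c s *m v) l = if ((l < c) && (l < q))%N then coefv v (l + s) else 0.
Proof.
case: (ltnP l q) => [lq | ql]; last by rewrite coefv_out // andbF.
rewrite andbT (coefv_ord _ (Ordinal lq)) mxE.
case: ifP => lc; last by rewrite big1 // => j _; rewrite mxE /= lc mul0r.
by rewrite -sum_coefv; apply: eq_bigr => j _; rewrite mxE /= lc.
Qed.

End Coefficients.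

Arguments window {R q}.

Section Bands.

Variables (K : fieldType) (q : nat).
Implicit Types (v x : 'cV[K]_q) (X : {vspace 'cV[K]_q}).

Definition band a k : {vspace 'cV[K]_q} :=
  <<[seq delta_mx i (0%R : 'I_1) | i : 'I_q <- pmap insub (iota a k)]>>%VS.

Lemma mem_bandP a k v :
  reflect (forall l, ~~ (a <= l < a + k)%N -> coefv v l = 0) (v \in band a k).
Proof.
rewrite /band; set L := map _ _.
have memL (i : 'I_q) : (i \in pmap insub (iota a k)) = (a <= i < a + k)%N.
  by rewrite mem_pmap_sub mem_iota.
apply: (iffP idP) => [vX l al | v0].
  case: (ltnP l q) => [lq | ql]; last exact: coefv_out.
  move/(@coord_span _ _ _ (in_tuple L)): vX => ->.
  rewrite (coefv_ord _ (Ordinal lq)) summxE big1 // => j _; rewrite mxE.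
  have /mapP[i iL ->] : (in_tuple L)`_j \in L by apply/mem_nth.
  rewrite mxE; case: eqP => [ei | _]; last by rewrite mulr0.
  by move: al; rewrite -[l]/(nat_of_ord (Ordinal lq)) ei -memL iL.
rewrite (matrix_sum_delta v); apply: memv_suml => i _; rewrite big_ord1.
case: (boolP (a <= i < a + k)%N) => ai.
  by apply/memvZ/memv_span/map_f; rewrite memL.
by rewrite -coefv_ord v0 // scale0r mem0v.
Qed.

Lemma dim_band_le a k : (\dim (band a k) <= k)%N.
Proof.
apply: leq_trans (dim_span _) _.
by rewrite size_map size_pmap_sub -{2}(size_iota a k) count_size.
Qed.

Lemma dim_band0 c : (c <= q)%N -> \dim (band 0 c) = c.
Proof.
move=> cq; apply/eqP; rewrite eqn_leq dim_band_le /=.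
have full : (fullv <= band 0 c + band c (q - c))%VS.
  apply/subvP => v _.
  have -> : v = window c 0 *m v + (v - window c 0 *m v) by rewrite addrC subrK.
  apply: memv_add; apply/mem_bandP => l.
    by rewrite coefv_window; case: (ltnP l c) => //=; lia.
  rewrite coefvB coefv_window addn0.
  case: (ltnP l q) => [lq | ql] cl; last by rewrite andbF coefv_out ?subr0.
  rewrite andbT; case: (ltnP l c) cl => [_ _ | ]; first exact: subrr.
  lia.
have := leq_trans (dimvS full) (dimv_add_leqif _ _).1.
rewrite dimvf dim_matrix; move: (dim_band_le c (q - c)); lia.
Qed.

Lemma dim_le_of_inj (M : 'M[K]_q) X a k :
  (forall x, x \in X -> M *m x = 0 -> x = 0) ->
  (forall x, x \in X -> M *m x \in band a k) -> (\dim X <= k)%N.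
Proof.
move=> Minj MX; pose f : 'End('cV[K]_q) := linfun (mulmx M).
have Xker : (X :&: lker f)%VS = 0%VS.
  apply/eqP; rewrite -subv0; apply/subvP => x.
  by rewrite memv_cap memv_ker lfunE memv0 => /andP[xX /eqP /(Minj x xX) ->].
rewrite -(limg_dim_eq Xker); apply: leq_trans (dim_band_le a k).
by apply: dimvS; apply/subvP => _ /memv_imgP[x xX ->]; rewrite lfunE MX.
Qed.

End Bands.

Arguments band {K} q a k.

Section Shift.

Variable q : nat.
Implicit Types (v : 'cV['F_2]_q) (l : nat).

Lemma coefv_shift1 v l :
  coefv (shiftQ q *m v) l = if ((0 < l) && (l < q))%N then coefv v l.-1 else 0.
Proof.
case: (ltnP l q) => [lq | ql]; last by rewrite coefv_out // andbF.
rewrite andbT (coefv_ord _ (Ordinal lq)) mxE -sum_coefv.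
case: l lq => [|l] lq /=.
  by rewrite big1 // => j _; rewrite mxE mul0r.
by apply: eq_bigr => j _; rewrite mxE /= eqSS eq_sym; case: eqP.
Qed.

Lemma coefv_shift k v l :
  coefv (shiftQ q ^+ k *m v) l = if ((k <= l) && (l < q))%N then coefv v (l - k) else 0.
Proof.
elim: k l => [|k IH] l.
  by rewrite expr0 mul1mx subn0; case: ltnP => // ql; rewrite coefv_out.
rewrite exprS -mulmxE -mulmxA coefv_shift1 IH.
case: l => [|l] //=; rewrite ltnS subSS.
by case: (ltnP l.+1 q) => lq; rewrite ?andbF // (ltnW lq) andbT.
Qed.

End Shift.

Lemma shift_windowK q d (x : 'cV['F_2]_q) :
  (forall l, (l < d)%N -> coefv x l = 0) -> shiftQ q ^+ d *m (window q d *m x) = x.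
Proof.
move=> x0; apply: coefv_inj => l; rewrite coefv_shift coefv_window.
case: (ltnP l q) => [lq | ql]; last by rewrite andbF coefv_out.
case: (leqP d l) => [dl | ld]; last by rewrite /= x0.
have -> : (l - d < q)%N by lia.
by rewrite subnK.
Qed.

Lemma chan_in_band q n k (y : 'cV['F_2]_q) :
  (n <= k)%N -> chan q n *m y \in band q (q - k) k.
Proof.
move=> nk; apply/mem_bandP => l; rewrite coefv_shift.
by case: (leqP (q - n) l) => //= ? ?; case: (ltnP l q) => //; lia.
Qed.

Lemma chan_mul_shift q a b : (a <= b <= q)%N ->
  chan q b *m shiftQ q ^+ (b - a) = chan q a.
Proof. by move=> abq; rewrite /chan mulmxE -exprD; congr (_ ^+ _); lia. Qed.

Lemma coefv_relay q k n c (x : 'cV['F_2]_q) l :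
  (c <= k <= q)%N -> (c <= n <= q)%N -> (l < c)%N ->
  coefv (chan q k *m (window c (q - n) *m (chan q n *m x))) (l + (q - k)) = coefv x l.
Proof.
move=> ckq cnq lc; rewrite coefv_shift addnK coefv_window coefv_shift.
have -> : (q - k <= l + (q - k) < q)%N by apply/andP; split; lia.
have -> : ((l < c) && (l < q))%N by apply/andP; split; lia.
have -> : (q - n <= l + (q - n) < q)%N by apply/andP; split; lia.
by rewrite addnK.
Qed.

Lemma window_chan_low q n m c (z : 'cV['F_2]_q) : (c <= n - m)%N -> (n <= q)%N ->
  window c (q - n) *m (chan q m *m z) = 0.
Proof.
move=> cnm nq; apply: coefv_inj => l; rewrite coefv0 coefv_window coefv_shift.
case: (ltnP l c) => //= lc; case: ltnP => //= lq.
by case: (leqP (q - m) (l + (q - n))) => //; lia.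
Qed.

Section Admissibility.

Variables n1 n2 n3 n4 m : nat.
Local Notation q := (qdim n1 n2 n3 n4 m).
Implicit Types (GA GB : 'M['F_2]_q) (X : {vspace 'cV['F_2]_q}) (x z : 'cV['F_2]_q).

Lemma admissible_inj GA GB X x : admissible n1 n2 n3 n4 m GA GB X ->
  x \in X -> GS n1 n2 n3 n4 m GA GB *m x = 0 -> x = 0.
Proof. by move=> adm xX Sx; apply: (adm x 0 xX (mem0v X) 0 0); rewrite !mulmx0 Sx. Qed.

Lemma admissible_of_GM0 GA GB X :
  (forall z, GM n1 n2 n3 n4 m GA GB *m z = 0) ->
  (forall x, x \in X -> GS n1 n2 n3 n4 m GA GB *m x = 0 -> x = 0) ->
  admissible n1 n2 n3 n4 m GA GB X.
Proof.
move=> M0 Sinj x x' xX x'X z z'; rewrite !M0 !addr0 => Sxx'.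
apply/eqP; rewrite -subr_eq0; apply/eqP/Sinj; first exact: memvB.
by rewrite mulmxBr Sxx' subrr.
Qed.

Lemma GS_in_band GA GB x :
  GS n1 n2 n3 n4 m GA GB *m x \in band q (q - maxn n3 n4) (maxn n3 n4).
Proof. by rewrite mulmxDl -!mulmxA memvD // chan_in_band ?leq_maxl ?leq_maxr. Qed.

Lemma is_linear_capacity_of c :
  (forall GA GB X, admissible n1 n2 n3 n4 m GA GB X -> (\dim X <= c)%N) ->
  (exists GA GB X, admissible n1 n2 n3 n4 m GA GB X /\ \dim X = c) ->
  is_linear_capacity n1 n2 n3 n4 m c.
Proof.
move=> ub [GA [GB [X [adm dimX]]]]; split.
  by exists GA, GB; split; [exists X | exact: ub].
by move=> GA' GB' r [[Y [admY <-]] _]; exact: ub admY.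
Qed.

End Admissibility.

Section EqualSourceGains.

Variables n1 n3 n4 m : nat.
Hypothesis m_lt_n1 : (m < n1)%N.
Local Notation q := (qdim n1 n1 n3 n4 m).
Local Notation GS := (GS n1 n1 n3 n4 m).
Local Notation GM := (GM n1 n1 n3 n4 m).
Local Notation admissible := (admissible n1 n1 n3 n4 m).
Implicit Types (GA GB : 'M['F_2]_q) (X : {vspace 'cV['F_2]_q}) (x z : 'cV['F_2]_q).

Lemma GM_eq GA GB : GM GA GB = GS GA GB *m shiftQ q ^+ (n1 - m).
Proof.
by rewrite /Defs.GS /Defs.GM mulmxDl -!mulmxA !chan_mul_shift // /qdim; lia.
Qed.

Lemma admissible_window_inj GA GB X x : admissible GA GB X -> x \in X ->
  window (n1 - m) 0 *m x = 0 -> x = 0.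
Proof.
move=> adm xX Wx.
have x_low l : (l < n1 - m)%N -> coefv x l = 0.
  move=> lnm; case: (ltnP l q) => [lq | ql]; last exact: coefv_out.
  by move: (coefv_window (n1 - m) 0 x l); rewrite Wx coefv0 lnm lq addn0.
apply: (adm x 0 xX (mem0v X) 0 (window q (n1 - m) *m x)).
by rewrite !mulmx0 addr0 add0r GM_eq -mulmxA shift_windowK.
Qed.

Lemma dim_admissible_le GA GB X : admissible GA GB X ->
  (\dim X <= minn (n1 - m) (maxn n3 n4))%N.
Proof.
move=> adm; rewrite leq_min; apply/andP; split.
  apply: (@dim_le_of_inj _ _ (window (n1 - m) 0) X 0) => [x | x _].
    exact: admissible_window_inj adm.
  by apply/mem_bandP => l; rewrite coefv_window; case: ltnP.
apply: (@dim_le_of_inj _ _ (GS GA GB) X (q - maxn n3 n4)) => [x | x _].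
  exact: admissible_inj adm.
exact: GS_in_band.
Qed.

Lemma single_relay_admissible k GA GB (c := minn (n1 - m) k) : (k <= q)%N ->
  GS GA GB = chan q k *m window c (q - n1) *m chan q n1 ->
  GM GA GB = chan q k *m window c (q - n1) *m chan q m ->
  admissible GA GB (band q 0 c).
Proof.
move=> kq eS eM; have n1q : (n1 <= q)%N by rewrite /qdim; lia.
apply: admissible_of_GM0 => [z | x xX].
  by rewrite eM -!mulmxA window_chan_low ?mulmx0 ?geq_minl.
rewrite eS -!mulmxA => Sx.
apply: coefv_inj => l; rewrite coefv0.
case: (ltnP l c) => lc; last by move/mem_bandP: xX; apply; lia.
have ckq : (c <= k <= q)%N by rewrite /c; lia.
have cn1q : (c <= n1 <= q)%N by rewrite /c; lia.
by rewrite -(coefv_relay x ckq cn1q lc) Sx coefv0.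
Qed.

Lemma exists_admissible_band :
  exists GA GB X, admissible GA GB X /\ \dim X = minn (n1 - m) (maxn n3 n4).
Proof.
set c := minn _ _; have cq : (c <= q)%N by rewrite /c /qdim; lia.
case: (leqP n4 n3) => [/maxn_idPl | /ltnW /maxn_idPr] N_eq; rewrite N_eq in c cq *.
- exists (window c (q - n1)), 0, (band q 0 c); split; last exact: dim_band0.
  apply: (@single_relay_admissible n3); first by rewrite /qdim; lia.
    by rewrite /Defs.GS mulmx0 mul0mx addr0.
  by rewrite /Defs.GM mulmx0 mul0mx addr0.
- exists 0, (window c (q - n1)), (band q 0 c); split; last exact: dim_band0.
  apply: (@single_relay_admissible n4); first by rewrite /qdim; lia.
    by rewrite /Defs.GS mulmx0 mul0mx add0r.
  by rewrite /Defs.GM mulmx0 mul0mx add0r.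
Qed.

End EqualSourceGains.

Local Close Scope ring_scope.

Theorem mainTheorem9 (n1 n2 n3 n4 m : nat) :
  n1 = n2 -> (m < n1)%N ->
  is_linear_capacity n1 n2 n3 n4 m (minn (n1 - m) (maxn n3 n4)).
Proof.
move=> <- m_lt_n1; apply: is_linear_capacity_of.
  by move=> GA GB X; exact: dim_admissible_le.
exact: exists_admissible_band.
Qed.
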